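(* For all integers $n\ge2$, $$\mathcal A_{2n-3}\cap\gamma_{n+1}(\mathcal R)=\mathcal A_{2n-1}.$$
   Context: $\mathcal R=\mathcal R(\mathbb F_2)$ is the Riordan group of pairs $(g,f)$ of formal power series over $\mathbb F_2$ with $g=1+\cdots$, $f=t+\cdots$, product $(g_1,f_1)(g_2,f_2)=(g_1\cdot(g_2\circ f_1),\,f_2\circ f_1)$; it is a pro-2 group with the $t$-adic topology. $\mathcal A=\{(g,t)\}$ is the Appell subgroup and $\mathcal A_m=\{(g,t):g\equiv1\pmod{t^{m+1}}\}$. The lower central series is $\gamma_1(\mathcal R)=\mathcal R$, $\gamma_i(\mathcal R)=[\gamma_{i-1}(\mathcal R),\mathcal R]$, where $[X,Y]$ is the smallest closed subgroup containing all commutators $x^{-1}y^{-1}xy$, $x\in X$, $y\in Y$. *)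

From mathcomp Require Import all_boot all_algebra.
Set Implicit Arguments. Unset Strict Implicit. Unset Printing Implicit Defensive.
Import GRing.Theory.
Local Open Scope ring_scope.

Definition series := nat -> 'F_2.

Definition sone : series := fun n => (n == 0%N)%:R.
Definition sX : series := fun n => (n == 1%N)%:R.

Definition smul (a b : series) : series :=
  fun n => \sum_(i < n.+1) a i * b (n - i)%N.

Definition spow (f : series) (k : nat) : series := iter k (smul f) sone.

(* Composition h o f, meaningful when f 0 = 0 (then each coefficient is a finite sum). *)
Definition scomp (h f : series) : series :=
  fun n => \sum_(k < n.+1) h k * spow f k n.

Definition rpair := (series * series)%type.

Definition inR (x : rpair) : Prop :=
  x.1 0%N = 1 /\ x.2 0%N = 0 /\ x.2 1%N = 1.

Definition rmul (x y : rpair) : rpair :=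
  (smul x.1 (scomp y.1 x.2), scomp y.2 x.2).

Definition rid : rpair := (sone, sX).

Definition rinv (x y : rpair) : Prop :=
  inR y /\ rmul x y = rid /\ rmul y x = rid.

Definition rset := rpair -> Prop.

Definition Appell (m : nat) : rset := fun x =>
  inR x /\ x.2 = sX /\ forall i, (1 <= i <= m)%N -> x.1 i = 0.

Definition subgroupR (H : rset) : Prop :=
  (forall x, H x -> inR x) /\ H rid /\
  (forall x y, H x -> H y -> H (rmul x y)) /\
  (forall x, H x -> exists y, H y /\ rinv x y).

(* closed subsets of R in the t-adic topology *)
Definition closedR (S : rset) : Prop :=
  forall x, inR x ->
    (forall N, exists s, S s /\ forall i, (i <= N)%N -> s.1 i = x.1 i /\ s.2 i = x.2 i) ->
    S x.

Definition is_comm (H K : rset) (c : rpair) : Prop :=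
  exists x y xi yi, H x /\ K y /\ inR x /\ inR y /\ rinv x xi /\ rinv y yi /\
    c = rmul (rmul (rmul xi yi) x) y.

Definition commR (H K : rset) : rset := fun z =>
  forall S, subgroupR S -> closedR S -> (forall c, is_comm H K c -> S c) -> S z.

(* gamma i = gamma_{i+1}(R) *)
Fixpoint gammaR (i : nat) : rset :=
  match i with
  | 0 => inR
  | i'.+1 => commR (gammaR i') inR
  end.

(* Let [Rlevel n] be the set of pairs (g, f) with g = 1 mod t^(2n) and f = t mod t^(2n+2),
   so that [Rlevel 0] is the whole group.  Each [Rlevel n] is a closed subgroup, and for x in
   [Rlevel n] and any y the products xy and yx agree modulo (t^(2n+2), t^(2n+4)).  This is a
   characteristic 2 phenomenon: for f = t + t^2 s one has f^2 = t^2 (1 + t^2 s^2), so composing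
   a series of order 2k with f changes it only from degree 2k+2 on.  Hence commutators of
   [Rlevel n] with the group lie in [Rlevel n.+1], gamma_(n+1) is contained in [Rlevel n], and
   an element of A_(2n-3) lying in gamma_(n+1) lies in A_(2n-1).

   Conversely A_(2n-1) <= gamma_(n+1), by induction on n.  For odd k > 2n and j in {1, 2}, the
   commutator of (1 + t^k, t), an element of A_(2n-1), with (1, t + t^(j+1)) is
   ((1 + psi^k) / (1 + t^k), t), where psi = t + t^(j+1) + O(t^(j+2)) is the compositional
   inverse of t + t^(j+1); as k is odd this is (1 + t^(k+j) + O(t^(k+j+1)), t).  The degrees
   k + j exhaust all m >= 2n+2, so inside the closed subgroup gamma_(n+2) any element of
   A_(2n+1) is reached by correcting one coefficient at a time. *)

From mathcomp Require Import all_boot all_algebra.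
From mathcomp Require Import ring zify.
From Stdlib Require Import FunctionalExtensionality.
Set Implicit Arguments. Unset Strict Implicit. Unset Printing Implicit Defensive.
Import GRing.Theory.
Local Open Scope ring_scope.

Notation F := 'F_2.
Notation P := {poly 'F_2}.
Implicit Types (p q r : P) (a b h f g : series).

Lemma addpp p : p + p = 0.
Proof.
have two0 : 2%:R = 0 :> F by apply/eqP.
by rewrite -mulr2n -mulr_natr -polyC_natr two0 mulr0.
Qed.

Lemma sqrpD p q : (p + q) ^+ 2 = p ^+ 2 + q ^+ 2.
Proof.
have -> : (p + q) ^+ 2 = p ^+ 2 + q ^+ 2 + (p * q + p * q) by ring.
by rewrite addpp addr0.
Qed.

Lemma natr_F2 k : k%:R = (odd k)%:R :> P.
Proof. by rewrite -!polyC_natr -(Fp_nat_mod (isT : prime 2)) modn2. Qed.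

Lemma F2_neq_add1 (a b : F) : a != b -> b = a + 1.
Proof. by case: a b => [[|[|//]] ?] [[|[|//]] ?]; rewrite //= => _; apply/val_inj. Qed.

(** * Congruences modulo powers of [X] *)

Definition eqmodX (m : nat) p q := 'X^m %| p - q.
Notation "p = q %[modX m ]" := (eqmodX m p q)
  (at level 70, q at next level, format "p  =  q  %[modX  m ]").

Lemma dvdXnP m p : reflect (forall i, (i < m)%N -> p`_i = 0) ('X^m %| p).
Proof.
apply: (iffP (modp_eq0P _ _)); rewrite -Pdiv.IdomainMonic.take_poly_modp.
  by move=> p0 i im; have := coef_take_poly m p i; rewrite p0 coef0 im.
move=> p0; apply/polyP => i; rewrite coef_take_poly coef0.
by case: ifP => // /p0.
Qed.

Lemma eqmodX_refl m p : p = p %[modX m].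
Proof. by rewrite /eqmodX subrr dvdp0. Qed.

Lemma eqmodX_sym m p q : p = q %[modX m] -> q = p %[modX m].
Proof. by rewrite /eqmodX -opprB dvdpNr. Qed.

Lemma eqmodX_trans m p q r : p = q %[modX m] -> q = r %[modX m] -> p = r %[modX m].
Proof. by rewrite /eqmodX -(subrKA q p (- r)); apply: dvdp_add. Qed.

Lemma eqmodX_le m n p q : (m <= n)%N -> p = q %[modX n] -> p = q %[modX m].
Proof. by move=> mn; apply: dvdp_trans; apply: dvdp_exp2l. Qed.

Lemma eqmodXD m p p' q q' :
  p = p' %[modX m] -> q = q' %[modX m] -> p + q = p' + q' %[modX m].
Proof. by rewrite /eqmodX opprD addrACA; apply: dvdp_add. Qed.

Lemma eqmodXM m p p' q q' :
  p = p' %[modX m] -> q = q' %[modX m] -> p * q = p' * q' %[modX m].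
Proof.
move=> pp' qq'; rewrite /eqmodX -(subrKA (p' * q)) -mulrBl -mulrBr.
by apply: dvdp_add; [apply: dvdp_mulr | apply: dvdp_mull].
Qed.

Lemma eqmodXX m p q k : p = q %[modX m] -> p ^+ k = q ^+ k %[modX m].
Proof.
move=> pq; elim: k => [|k IHk]; first exact: eqmodX_refl.
by rewrite !exprS; apply: eqmodXM.
Qed.

Lemma eqmodX_coef m p q i : p = q %[modX m] -> (i < m)%N -> p`_i = q`_i.
Proof. by move=> /dvdXnP pq im; apply/eqP; rewrite -subr_eq0 -coefB pq. Qed.

Lemma coef_eqmodX m p q : (forall i, (i < m)%N -> p`_i = q`_i) -> p = q %[modX m].
Proof. by move=> pq; apply/dvdXnP => i im; rewrite coefB pq ?subrr. Qed.

Lemma comp_polyXn n q : 'X^n \Po q = q ^+ n.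
Proof. by rewrite rmorphXn /= comp_polyX. Qed.

Lemma dvdX_comp m p q : 'X^m %| p -> 'X %| q -> 'X^m %| p \Po q.
Proof.
move=> /dvdpP[r ->] Xq; rewrite comp_polyM comp_polyXn dvdp_mull //.
by rewrite dvdp_exp2r.
Qed.

Lemma eqmodX_compl m p p' q : p = p' %[modX m] -> 'X %| q ->
  p \Po q = p' \Po q %[modX m].
Proof. by rewrite /eqmodX -comp_polyB; apply: dvdX_comp. Qed.

Lemma eqmodX_compr m p q q' : q = q' %[modX m] -> p \Po q = p \Po q' %[modX m].
Proof.
move=> qq'; elim/poly_ind: p => [|p c IHp]; first by rewrite !comp_poly0; apply: eqmodX_refl.
rewrite !comp_poly_MXaddC; apply: eqmodXD; last exact: eqmodX_refl.
exact: eqmodXM.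
Qed.

Lemma tangent_decomp p : p`_0 = 0 -> p`_1 = 1 -> exists s, p = 'X + 'X^2 * s.
Proof.
move=> p0 p1; have /dvdpP[s ps] : 'X^2 %| p - 'X.
  by apply/dvdXnP => -[|[|//]] _; rewrite coefB coefX ?p0 ?p1 subrr.
by exists s; rewrite mulrC -ps addrC subrK.
Qed.

Lemma comp_tangent_sub p (u e : P) k : p`_0 = 0 -> p`_1 = 1 -> 'X %| u -> 'X^k %| e ->
  (0 < k)%N -> p \Po (u - e) = p \Po u - e %[modX k.+1].
Proof.
move=> p0 p1 Xu Xe k_gt0; have [s ->] := tangent_decomp p0 p1.
rewrite /eqmodX (_ : _ \Po (u - e) - _ = e * (e - u - u) * (s \Po (u - e))
    + u ^+ 2 * ((s \Po (u - e)) - (s \Po u))); last by rewrite !comp_polyD !comp_polyM !comp_polyX; ring.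
have Xeu : 'X %| e - u - u.
  by rewrite !dvdp_sub // (dvdp_trans _ Xe) // -{1}(expr1 'X) dvdp_exp2l.
apply: dvdp_add; first by rewrite dvdp_mulr // exprSr dvdp_mul.
have su : s \Po (u - e) = s \Po u %[modX k].
  by apply: eqmodX_compr; rewrite /eqmodX addrC addKr dvdpNr.
apply: (@dvdp_trans _ ('X^2 * 'X^k)); first by rewrite -exprD dvdp_exp2l.
by rewrite dvdp_mul ?dvdp_exp2r.
Qed.

(** * Power series through their truncations *)

Definition agree m a p := forall i, (i < m)%N -> a i = p`_i.
Definition trunc m a : P := \poly_(i < m) a i.

Lemma agree_trunc {m a} : agree m a (trunc m a).
Proof. by move=> i im; rewrite coef_poly im. Qed.

Lemma agree_eqmodX m a p q : agree m a p -> p = q %[modX m] -> agree m a q.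
Proof. by move=> ap pq i im; rewrite ap // (eqmodX_coef pq im). Qed.

Lemma agree_uniq m a p q : agree m a p -> agree m a q -> p = q %[modX m].
Proof. by move=> ap aq; apply: coef_eqmodX => i im; rewrite -ap // -aq. Qed.

Lemma agree_le n m a p : (n <= m)%N -> agree m a p -> agree n a p.
Proof. by move=> nm ap i im; apply: ap; apply: leq_trans nm. Qed.

Lemma trunc_eqmodX m n a : (m <= n)%N -> trunc n a = trunc m a %[modX m].
Proof. by move=> mn; exact: agree_uniq (agree_le mn (@agree_trunc n a)) (@agree_trunc m a). Qed.

Lemma agree_eq_trunc m a b : (forall i, (i < m)%N -> a i = b i) -> agree m b (trunc m a).
Proof. by move=> ab i im; rewrite -ab //; apply: agree_trunc. Qed.

Lemma series_ext a b : (forall m, exists p, agree m a p /\ agree m b p) -> a = b.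
Proof.
move=> ab; apply: functional_extensionality => i.
by have [p [ap bp]] := ab i.+1; rewrite ap // bp.
Qed.

Lemma agree_sone {m} : agree m sone 1.
Proof. by move=> i _; rewrite coef1. Qed.

Lemma agree_sX {m} : agree m sX 'X.
Proof. by move=> i _; rewrite coefX. Qed.

Lemma agree_smul m a b p q : agree m a p -> agree m b q -> agree m (smul a b) (p * q).
Proof.
move=> ap bq i im; rewrite /smul coefM; apply: eq_bigr => j _.
have ji : (j <= i)%N by rewrite -ltnS.
by rewrite ap ?bq //; apply: leq_ltn_trans im; [apply: leq_subr | ].
Qed.

Lemma agree_spow m f q k : agree m f q -> agree m (spow f k) (q ^+ k).
Proof.
move=> fq; elim: k => [|k IHk]; first exact: agree_sone.
by rewrite exprS; apply: agree_smul.
Qed.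

Lemma sum_ord_widen n N (G : nat -> F) : (n <= N)%N ->
  (forall k, (n <= k < N)%N -> G k = 0) -> \sum_(k < n) G k = \sum_(k < N) G k.
Proof.
move=> nN G0; rewrite (big_ord_widen N G nN) big_mkcond; apply: eq_bigr => k _.
by case: ifP => // /negbT; rewrite -leqNgt => nk; rewrite G0 // nk ltn_ord.
Qed.

Lemma agree_scomp m h f p q : agree m h p -> agree m f q -> f 0%N = 0 ->
  agree m (scomp h f) (p \Po q).
Proof.
move=> hp fq f0 i im.
have Xq : 'X %| q by apply/(dvdXnP 1) => -[_|//]; rewrite -fq //; apply: leq_ltn_trans im.
have qk0 k : (i < k)%N -> (q ^+ k)`_i = 0.
  by move=> ik; apply: (dvdXnP _ _ (dvdp_exp2r k Xq)).
set N := maxn (size p) i.+1.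
rewrite /scomp coef_comp_poly.
rewrite (@sum_ord_widen i.+1 N (fun k => h k * spow f k i)); last 2 first.
- exact: leq_maxr.
- by move=> k /andP[ik _]; rewrite (agree_spow k fq im) qk0 ?mulr0.
rewrite (@sum_ord_widen (size p) N (fun k => p`_k * (q ^+ k)`_i)); last 2 first.
- exact: leq_maxl.
- by move=> k /andP[pk _]; rewrite nth_default ?mul0r.
apply: eq_bigr => k _; rewrite (agree_spow k fq im).
have [ki | ik] := leqP k i; last by rewrite qk0 ?mulr0.
by rewrite hp //; apply: leq_ltn_trans im.
Qed.

Lemma smulC a b : smul a b = smul b a.
Proof.
apply: series_ext => m; exists (trunc m a * trunc m b); split.
  by apply: agree_smul; apply: agree_trunc.
by rewrite mulrC; apply: agree_smul; apply: agree_trunc.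
Qed.

Lemma smulA a b h : smul (smul a b) h = smul a (smul b h).
Proof.
apply: series_ext => m; exists (trunc m a * trunc m b * trunc m h); split.
  by apply: agree_smul; [apply: agree_smul|]; apply: agree_trunc.
by rewrite -mulrA; apply: agree_smul; [|apply: agree_smul]; apply: agree_trunc.
Qed.

Lemma smul1s a : smul sone a = a.
Proof.
apply: series_ext => m; exists (1 * trunc m a); split; last by rewrite mul1r; apply: agree_trunc.
by apply: agree_smul; [apply: agree_sone | apply: agree_trunc].
Qed.

Lemma smuls1 a : smul a sone = a.
Proof. by rewrite smulC smul1s. Qed.

Lemma scompsX h : scomp h sX = h.
Proof.
apply: series_ext => m; exists (trunc m h \Po 'X); split.
  by apply: agree_scomp; [apply: agree_trunc | apply: agree_sX |].
by rewrite comp_polyXr; apply: agree_trunc.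
Qed.

Lemma scompXs f : f 0%N = 0 -> scomp sX f = f.
Proof.
move=> f0; apply: series_ext => m; exists ('X \Po trunc m f); split.
  by apply: agree_scomp; [apply: agree_sX | apply: agree_trunc |].
by rewrite comp_polyX; apply: agree_trunc.
Qed.

Lemma scomp1s f : f 0%N = 0 -> scomp sone f = sone.
Proof.
move=> f0; apply: series_ext => m; exists (1 \Po trunc m f); split.
  by apply: agree_scomp; [apply: agree_sone | apply: agree_trunc |].
by rewrite comp_polyC; apply: agree_sone.
Qed.

Lemma scompM a b f : f 0%N = 0 -> scomp (smul a b) f = smul (scomp a f) (scomp b f).
Proof.
move=> f0; apply: series_ext => m; exists ((trunc m a * trunc m b) \Po trunc m f); split.
  by apply: agree_scomp => //; [apply: agree_smul|]; apply: agree_trunc.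
by rewrite comp_polyM; apply: agree_smul; apply: agree_scomp => //; apply: agree_trunc.
Qed.

Lemma scompA h g f : g 0%N = 0 -> f 0%N = 0 -> scomp (scomp h g) f = scomp h (scomp g f).
Proof.
move=> g0 f0; apply: series_ext => m.
exists ((trunc m h \Po trunc m g) \Po trunc m f); split.
  by apply: agree_scomp => //; [apply: agree_scomp|]; try apply: agree_trunc.
rewrite -comp_polyA; apply: agree_scomp; first exact: agree_trunc.
  by apply: agree_scomp => //; apply: agree_trunc.
by rewrite /scomp big_ord1 g0 mul0r.
Qed.

Lemma agree_diag (U : nat -> P) : (forall j, U j.+1 = U j %[modX j.+1]) ->
  forall j, agree j.+1 (fun i => (U i)`_i) (U j).
Proof.
move=> U_step j i; rewrite ltnS => ij; apply: esym; apply: eqmodX_coef (ltnSn i).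
elim: j ij => [|j IHj]; first by rewrite leqn0 => /eqP->; apply: eqmodX_refl.
rewrite leq_eqVlt ltnS => /predU1P[->|ij]; first exact: eqmodX_refl.
by apply: eqmodX_trans (IHj ij); apply: eqmodX_le (U_step j).
Qed.

Section SeriesInverse.
Variable w : series.
Hypothesis w0 : w 0%N = 1.

Fixpoint inv_approx (j : nat) : P :=
  if j is j'.+1 then let v := inv_approx j' in v - (trunc j.+1 w * v - 1) else 1.

Lemma inv_approxP j : trunc j.+1 w * inv_approx j = 1 %[modX j.+1].
Proof.
elim: j => [|j IHj].
  by apply: coef_eqmodX => -[|//] _; rewrite mulr1 coef_poly coef1.
rewrite [inv_approx j.+1]/=.
set v := inv_approx j; set W := trunc j.+2 w.
have e0 : W * v = 1 %[modX j.+1].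
  by apply: eqmodX_trans IHj; apply: eqmodXM (eqmodX_refl _ _); apply: trunc_eqmodX.
have W1 : 'X %| 1 - W.
  by apply/(dvdXnP 1) => -[_|//]; rewrite coefB coef_poly w0 coef1 subrr.
rewrite /eqmodX (_ : W * (v - _) - 1 = (W * v - 1) * (1 - W)); last by ring.
by rewrite exprSr dvdp_mul.
Qed.

Lemma inv_approx_step j : inv_approx j.+1 = inv_approx j %[modX j.+1].
Proof.
rewrite /eqmodX [inv_approx j.+1]/= addrAC subrr add0r dvdpNr.
apply: eqmodX_trans (inv_approxP j).
by apply: eqmodXM (eqmodX_refl _ _); apply: trunc_eqmodX.
Qed.

Lemma smul_inverse : exists v, smul w v = sone.
Proof.
have v_agree := agree_diag inv_approx_step.
exists (fun i => (inv_approx i)`_i); apply: series_ext => -[|j].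
  by exists 0; split.
exists 1; split; last exact: agree_sone.
apply: agree_eqmodX (inv_approxP j).
by apply: agree_smul; [apply: agree_trunc | apply: v_agree].
Qed.

End SeriesInverse.

Section CompInverse.
Variable f : series.
Hypotheses (f0 : f 0%N = 0) (f1 : f 1%N = 1).

Fixpoint comp_inv_approx (j : nat) : P :=
  if j is j'.+1 then let u := comp_inv_approx j' in u - (trunc j.+1 f \Po u - 'X)
  else 'X.

Lemma comp_inv_approxP j :
  'X %| comp_inv_approx j /\ trunc j.+1 f \Po comp_inv_approx j = 'X %[modX j.+1].
Proof.
elim: j => [|j [Xu IHj]].
  split; first exact: dvdpp.
  by apply: coef_eqmodX => -[|//] _; rewrite /= comp_polyXr coef_poly f0 coefX.
rewrite [comp_inv_approx j.+1]/=.
set u := comp_inv_approx j; set W := trunc j.+2 f.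
have e0 : W \Po u = 'X %[modX j.+1].
  by apply: eqmodX_trans IHj; apply: eqmodX_compl Xu; apply: trunc_eqmodX.
split; first by rewrite dvdp_sub // (dvdp_trans _ e0) // -{1}(expr1 'X) dvdp_exp2l.
have W0 : W`_0 = 0 by rewrite coef_poly f0.
have W1 : W`_1 = 1 by rewrite coef_poly f1.
apply: eqmodX_trans (comp_tangent_sub W0 W1 Xu e0 (ltn0Sn j)) _.
by rewrite /eqmodX -/u addrAC subrr dvdp0.
Qed.

Lemma comp_inv_approx_step j : comp_inv_approx j.+1 = comp_inv_approx j %[modX j.+1].
Proof.
rewrite /eqmodX [comp_inv_approx j.+1]/= addrAC subrr add0r dvdpNr.
have [Xu IHj] := comp_inv_approxP j.
by apply: eqmodX_trans IHj; apply: eqmodX_compl Xu; apply: trunc_eqmodX.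
Qed.

Lemma scomp_inverse : exists u, [/\ scomp f u = sX, u 0%N = 0 & u 1%N = 1].
Proof.
have u_agree := agree_diag comp_inv_approx_step.
set u := fun i => (comp_inv_approx i)`_i.
have u0 : u 0%N = 0 by rewrite /u coefX.
exists u; split => //; last first.
  by rewrite /u /= coefB coefX coefB comp_polyXr coef_poly f1 coefX subrr subr0.
apply: series_ext => -[|j]; first by exists 0; split.
exists 'X; split; last exact: agree_sX.
have [_ IHj] := comp_inv_approxP j.
by apply: agree_eqmodX IHj; apply: agree_scomp => //; [apply: agree_trunc | apply: u_agree].
Qed.

End CompInverse.

(** * The Riordan group *)

Lemma inR_agree x : inR x <-> agree 1 x.1 1 /\ agree 2 x.2 'X.
Proof.
split=> [[g0 [f0 f1]] | [g1 f2]].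
  by split=> -[|[|//]] // _; rewrite ?coef1 ?coefX.
by split; [|split]; rewrite ?g1 ?f2 ?coef1 ?coefX.
Qed.

Lemma inR_f0 x : inR x -> x.2 0%N = 0.
Proof. by case=> _ []. Qed.

Lemma agree_rmul1 m x y p q r : x.2 0%N = 0 ->
  agree m x.1 p -> agree m y.1 q -> agree m x.2 r -> agree m (rmul x y).1 (p * (q \Po r)).
Proof. by move=> x0 xp yq xr; apply: agree_smul => //; apply: agree_scomp. Qed.

Lemma agree_rmul2 m x y q r : x.2 0%N = 0 ->
  agree m y.2 q -> agree m x.2 r -> agree m (rmul x y).2 (q \Po r).
Proof. by move=> x0 yq xr; apply: agree_scomp. Qed.

Lemma inR_mul x y : inR x -> inR y -> inR (rmul x y).
Proof.
move=> /inR_agree[gx fx] /inR_agree[gy fy]; apply/inR_agree.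
have x0 : x.2 0%N = 0 by rewrite fx // coefX.
split; last by rewrite -[X in agree _ _ X](comp_polyX 'X); apply: agree_rmul2.
rewrite -[1](mul1r 1) -{2}[1](comp_polyXr 1).
by apply: agree_rmul1 => //; apply: agree_le fx.
Qed.

Lemma rmulA x y z : x.2 0%N = 0 -> y.2 0%N = 0 -> rmul (rmul x y) z = rmul x (rmul y z).
Proof. by move=> x0 y0; rewrite /rmul /= scompM // scompA // smulA scompA. Qed.

Lemma rmul1 x : rmul rid x = x.
Proof. by case: x => g f; rewrite /rmul /= !scompsX smul1s. Qed.

Lemma rmulr1 x : x.2 0%N = 0 -> rmul x rid = x.
Proof. by case: x => g f /= f0; rewrite /rmul /= scomp1s // smuls1 scompXs. Qed.

Lemma rmul_left_inverse x : inR x -> exists y, inR y /\ rmul y x = rid.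
Proof.
case: x => g f [/= g0 [f0 f1]].
have [u [fu u0 u1]] := scomp_inverse f0 f1.
have gu0 : scomp g u 0%N = 1 by rewrite /scomp big_ord1 g0 mul1r.
have [v gv] := smul_inverse gu0.
have v0 : v 0%N = 1 by move: (congr1 (fun s : series => s 0%N) gv); rewrite /smul big_ord1 gu0 mul1r.
by exists (v, u); split; [split | rewrite /rmul /= fu smulC gv].
Qed.

Lemma rinv_exists x : inR x -> exists y, rinv x y.
Proof.
move=> Rx; have [y [Ry yx]] := rmul_left_inverse Rx.
have [z [Rz zy]] := rmul_left_inverse Ry.
suff xz : x = z by exists y; split; [|split; [rewrite xz|]].
by rewrite -(rmul1 x) -zy rmulA ?inR_f0 // yx rmulr1 ?inR_f0.
Qed.

Lemma commutatorE x y xi yi : inR x -> inR y -> rinv x xi -> rinv y yi ->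
  exists2 u, inR u /\ rmul u (rmul y x) = rid &
             rmul (rmul (rmul xi yi) x) y = rmul u (rmul x y).
Proof.
move=> Rx Ry [Rxi [_ xix]] [Ryi [_ yiy]]; have Ru := inR_mul Rxi Ryi.
exists (rmul xi yi); last by rewrite rmulA ?inR_f0.
split=> //; rewrite rmulA ?inR_f0 // -(@rmulA yi) ?inR_f0 //.
by rewrite yiy rmul1.
Qed.

(** * The levels [Rlevel n] *)

Lemma comp_tangent_even k (D u : P) : 'X^(2 * k) %| D -> 'X^2 %| u - 'X ->
  D \Po u = D %[modX 2 * k + 2].
Proof.
move=> /dvdpP[d ->] /dvdpP[s us].
have u2 : u ^+ 2 = 'X^2 * (1 + 'X^2 * s ^+ 2).
  by rewrite -(subrK 'X u) us addrC sqrpD; ring.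
have c1 : (1 + 'X^2 * s ^+ 2) ^+ k = 1 %[modX 2].
  have c : 1 + 'X^2 * s ^+ 2 = 1 %[modX 2] by rewrite /eqmodX addrAC subrr add0r dvdp_mulr.
  by have := eqmodXX k c; rewrite expr1n.
have df : d \Po u = d %[modX 2].
  by rewrite -{2}(comp_polyXr d); apply: eqmodX_compr; rewrite /eqmodX us dvdp_mull.
rewrite comp_polyM comp_polyXn exprM u2 exprMn -exprM /eqmodX.
rewrite (_ : _ - _ = ((d \Po u) * (1 + 'X^2 * s ^+ 2) ^+ k - d) * 'X^(2 * k)); last by ring.
rewrite addnC exprD; apply: dvdp_mul (dvdpp _).
by have := eqmodXM df c1; rewrite mulr1.
Qed.

Lemma comp_tangent_fix n (g u : P) : 'X^(2 * n) %| g - 1 -> 'X^2 %| u - 'X ->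
  g \Po u = g %[modX 2 * n + 2].
Proof.
move=> g1 uX; rewrite -(subrK 1 g) comp_polyD rmorph1.
by apply: eqmodXD (eqmodX_refl _ _); apply: comp_tangent_even.
Qed.

Lemma comp_tangent_commute n (u v : P) : 'X^(2 * n + 2) %| u - 'X -> 'X^2 %| v - 'X ->
  v \Po u = u \Po v %[modX 2 * n + 4].
Proof.
move=> uX vX; have /dvdpP[s vs] := vX.
have su : s \Po u = s %[modX 2 * n + 2].
  by rewrite -{2}(comp_polyXr s); apply: eqmodX_compr.
have vu : v \Po u = u + (v - 'X) %[modX 2 * n + 4].
  rewrite -{1}(subrKC 'X v) vs comp_polyD comp_polyX comp_polyM comp_polyXn /eqmodX.
  rewrite (_ : _ - _ = (s \Po u) * (u - 'X) ^+ 2 + (s \Po u) * ('X * (u - 'X) + 'X * (u - 'X))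
                       + ((s \Po u) - s) * 'X^2); last by ring.
  rewrite addpp mulr0 addr0; apply: dvdp_add.
    apply: dvdp_mull; apply: dvdp_trans (dvdp_exp2r 2 uX).
    by rewrite -exprM dvdp_exp2l //; lia.
  by rewrite -[(2 * n + 4)%N]/(2 * n + (2 + 2))%N addnA exprD dvdp_mul.
have uv : u \Po v = u - 'X + v %[modX 2 * n + 4].
  rewrite -{1}(subrKC 'X u) comp_polyD comp_polyX addrC; apply: eqmodXD (eqmodX_refl _ _).
  have uX' : 'X^(2 * n.+1) %| u - 'X by rewrite mulnS addnC.
  by rewrite (_ : (2 * n + 4 = 2 * n.+1 + 2)%N); [exact: comp_tangent_even | lia].
rewrite addrA addrAC in vu.
exact: eqmodX_trans vu (eqmodX_sym uv).
Qed.

Definition rcongr m m' (x y : rpair) :=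
  (forall i, (i < m)%N -> x.1 i = y.1 i) /\ (forall i, (i < m')%N -> x.2 i = y.2 i).

Lemma rcongr_sym m m' x y : rcongr m m' x y -> rcongr m m' y x.
Proof. by case=> e1 e2; split=> i /[dup] im; [move/e1 | move/e2]. Qed.

Lemma rcongr_trans m m' x y z : rcongr m m' x y -> rcongr m m' y z -> rcongr m m' x z.
Proof. by case=> e1 e2 [e1' e2']; split=> i im; rewrite ?e1 ?e1' ?e2 ?e2'. Qed.

Lemma rcongr_agree m m' x y p q : agree m x.1 p -> agree m y.1 p ->
  agree m' x.2 q -> agree m' y.2 q -> rcongr m m' x y.
Proof. by move=> xp yp xq yq; split=> i im; rewrite ?xp ?yp ?xq ?yq. Qed.

Lemma rcongr_rmull m m' u x y : u.2 0%N = 0 -> rcongr m m' x y ->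
  rcongr m m' (rmul u x) (rmul u y).
Proof.
move=> u0 [e1 e2].
apply: (@rcongr_agree _ _ _ _ (trunc m u.1 * (trunc m x.1 \Po trunc m u.2))
                             (trunc m' x.2 \Po trunc m' u.2)).
- by apply: agree_rmul1 => //; apply: agree_trunc.
- by apply: agree_rmul1 => //; [apply: agree_trunc | apply: agree_eq_trunc | apply: agree_trunc].
- by apply: agree_rmul2 => //; apply: agree_trunc.
- by apply: agree_rmul2 => //; [apply: agree_eq_trunc | apply: agree_trunc].
Qed.

Definition Rlevel n x := inR x /\ rcongr (2 * n) (2 * n + 2) x rid.

Lemma Rlevel_agree n x : Rlevel n x -> agree (2 * n) x.1 1 /\ agree (2 * n + 2) x.2 'X.
Proof.
by case=> _ [e1 e2]; split=> i im; [rewrite e1 //; apply: agree_sone | rewrite e2 //; apply: agree_sX].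
Qed.

Lemma Rlevel0 x : inR x -> Rlevel 0 x.
Proof. by move=> /[dup] Rx /inR_agree[_ fx]; split=> //; split=> // i /fx ->; rewrite coefX. Qed.

Lemma Rlevel_subgroup n : subgroupR (Rlevel n).
Proof.
have r0 x : inR x -> rmul x rid = x by move=> /inR_f0; apply: rmulr1.
split; first by move=> x [].
split; first by split; [split; [|split] | split].
split=> [x y [Rx xr] [Ry yr] | x [Rx xr]].
  split; first exact: inR_mul.
  by apply: rcongr_trans xr; rewrite -{2}(r0 x Rx); apply: rcongr_rmull (inR_f0 Rx) yr.
have [y yinv] := rinv_exists Rx; exists y; split=> //; case: yinv => Ry [_ yx].
split=> //; rewrite -(r0 y Ry) -{2}yx.
exact: rcongr_rmull (inR_f0 Ry) (rcongr_sym xr).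
Qed.

Lemma Rlevel_closed n : closedR (Rlevel n).
Proof.
move=> x Rx x_lim; split=> //; split=> i im; have [s [[_ [e1 e2]] sx]] := x_lim i;
  by have [s1 s2] := sx i (leqnn i); rewrite -?s1 -?s2 ?e1 ?e2.
Qed.

Lemma rmul_commute_mod n x y : Rlevel n x -> inR y ->
  rcongr (2 * n.+1) (2 * n.+1 + 2) (rmul x y) (rmul y x).
Proof.
move=> Lx Ry; have [gx fx] := Rlevel_agree Lx; have [_ fy] := (inR_agree y).1 Ry.
have x0 := inR_f0 (proj1 Lx); have y0 := inR_f0 Ry.
set M := (2 * n + 4)%N.
set Gx := trunc M x.1; set Fx := trunc M x.2; set Gy := trunc M y.1; set Fy := trunc M y.2.
have gxM : (2 * n <= M)%N by rewrite leq_addr.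
have fxM : (2 * n + 2 <= M)%N by rewrite leq_add2l.
have Gx1 : 'X^(2 * n) %| Gx - 1 := agree_uniq (agree_le gxM agree_trunc) gx.
have FxX : 'X^(2 * n + 2) %| Fx - 'X := agree_uniq (agree_le fxM agree_trunc) fx.
have FyX : 'X^2 %| Fy - 'X by apply: agree_uniq (agree_le _ agree_trunc) fy; rewrite /M; lia.
have e1 : Gx * (Gy \Po Fx) = Gy * (Gx \Po Fy) %[modX 2 * n + 2].
  rewrite mulrC; apply: eqmodXM; last exact/eqmodX_sym/comp_tangent_fix.
  by rewrite -{2}(comp_polyXr Gy); apply: eqmodX_compr.
have e2 := comp_tangent_commute FxX FyX.
have -> : (2 * n.+1 = 2 * n + 2)%N by lia.
have -> : (2 * n + 2 + 2 = M)%N by rewrite /M; lia.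
apply: (@rcongr_agree _ _ _ _ (Gx * (Gy \Po Fx)) (Fy \Po Fx)).
- by apply: agree_le fxM _; apply: agree_rmul1 => //; apply: agree_trunc.
- apply: agree_eqmodX (eqmodX_sym e1); apply: agree_le fxM _.
  by apply: agree_rmul1 => //; apply: agree_trunc.
- by apply: agree_rmul2 => //; apply: agree_trunc.
- by apply: agree_eqmodX (eqmodX_sym e2); apply: agree_rmul2 => //; apply: agree_trunc.
Qed.

Lemma Rlevel_comm n c : is_comm (Rlevel n) inR c -> Rlevel n.+1 c.
Proof.
move=> [x [y [xi [yi [Lx [_ [Rx [Ry [xxi [yyi ->]]]]]]]]]].
have [u [Ru uyx] ->] := commutatorE Rx Ry xxi yyi.
split; first by do 2 apply: inR_mul => //.
by rewrite -uyx; apply: rcongr_rmull (inR_f0 Ru) (rmul_commute_mod Lx Ry).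
Qed.

Lemma gamma_Rlevel n x : gammaR n x -> Rlevel n x.
Proof.
elim: n x => [|n IHn] x; first exact: Rlevel0.
apply; [exact: Rlevel_subgroup | exact: Rlevel_closed |].
move=> c [x' [y [xi [yi [gx' comm_c]]]]]; apply: Rlevel_comm.
by exists x', y, xi, yi; split; first exact: IHn.
Qed.

(** * Commutators with Appell elements *)

Lemma exp1D_linear (y : P) k : y ^+ 2 %| (1 + y) ^+ k - (1 + k%:R * y).
Proof.
elim: k => [|k IHk]; first by rewrite expr0 mul0r addr0 subrr dvdp0.
rewrite (_ : _ - _ = (1 + y) * ((1 + y) ^+ k - (1 + k%:R * y)) + k%:R * y ^+ 2).
  by apply: dvdp_add; [apply: dvdp_mull | apply: dvdp_mulIr].
by rewrite exprS mulrS; ring.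
Qed.

Lemma expr_odd_tangent (phi : P) j k : (0 < j)%N -> odd k ->
  phi = 'X + 'X^(j.+1) %[modX j.+2] -> phi ^+ k = 'X^k + 'X^(k + j) %[modX (k + j).+1].
Proof.
move=> j_gt0 k_odd /dvdpP[r phir].
set y := 'X^j + 'X^(j.+1) * r.
have phiy : phi = 'X * (1 + y) by rewrite -(subrK ('X + 'X^(j.+1)) phi) phir /y !exprS; ring.
rewrite phiy exprMn /eqmodX.
rewrite (_ : _ - _ = 'X^k * ((1 + y) ^+ k - (1 + k%:R * y)) + 'X^((k + j).+1) * r); last first.
  by rewrite natr_F2 k_odd /y !exprS !exprD mul1r; ring.
apply: dvdp_add; last exact/dvdp_mulr/dvdpp.
have Xy : 'X^j %| y.
  by apply: dvdp_add (dvdpp _) _; apply: dvdp_mulr; apply: dvdp_exp2l.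
apply: (@dvdp_trans _ ('X^k * 'X^(j * 2))); first by rewrite -exprD dvdp_exp2l //; lia.
by apply: dvdp_mul (dvdpp _) _; apply: dvdp_trans (exp1D_linear y k); rewrite exprM dvdp_exp2r.
Qed.

Lemma tangent_inverse_approx (phi : P) j : 'X^2 %| phi - 'X ->
  phi + phi ^+ j.+1 = 'X %[modX j.+2] -> phi = 'X + 'X^(j.+1) %[modX j.+2].
Proof.
move=> /dvdpP[s phis] phi_inv.
have phi_pow : phi ^+ j.+1 = 'X^(j.+1) %[modX j.+2].
  have c1 : 1 + s * 'X = 1 %[modX 1] by rewrite /eqmodX addrAC subrr add0r dvdp_mull.
  rewrite -(subrK 'X phi) phis (_ : s * 'X^2 + 'X = 'X * (1 + s * 'X)); last by ring.
  rewrite exprMn /eqmodX -{2}(mulr1 'X^(j.+1)) -mulrBr exprSr dvdp_mul //.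
  by have := eqmodXX j.+1 c1; rewrite expr1n.
rewrite /eqmodX (_ : _ - _ = (phi + phi ^+ j.+1 - 'X) - (phi ^+ j.+1 - 'X^(j.+1))
                            - ('X^(j.+1) + 'X^(j.+1))); last by ring.
by rewrite addpp subr0 dvdp_sub.
Qed.

Lemma appell_comm_estimate k j (G phi : P) : (0 < j)%N -> odd k ->
  'X %| G - 1 -> 'X^2 %| phi - 'X ->
  G * (1 + 'X^k) = 1 %[modX (k + j).+1] -> phi + phi ^+ j.+1 = 'X %[modX (k + j).+1] ->
  G * (1 + phi ^+ k) = 1 + 'X^(k + j) %[modX (k + j).+1].
Proof.
move=> j_gt0 k_odd G1 phiX Ginv phi_inv.
have jk : (j.+2 <= (k + j).+1)%N by rewrite ltnS addnC -addn1 leq_add2l odd_gt0.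
have phik := expr_odd_tangent j_gt0 k_odd (tangent_inverse_approx phiX (eqmodX_le jk phi_inv)).
apply: eqmodX_trans (eqmodXM (eqmodX_refl _ G) (eqmodXD (eqmodX_refl _ 1) phik)) _.
rewrite /eqmodX (_ : _ - _ = (G * (1 + 'X^k) - 1) + 'X^(k + j) * (G - 1)); last by ring.
by rewrite dvdp_add // exprSr dvdp_mul.
Qed.

Lemma appell_comm_shape g phi u : phi 0%N = 0 -> u.2 0%N = 0 ->
  rmul u (rmul (sone, phi) (g, sX)) = rid ->
  [/\ smul u.1 g = sone, scomp phi u.2 = sX
    & rmul u (rmul (g, sX) (sone, phi)) = (smul u.1 (scomp g u.2), sX)].
Proof.
case: u => gu fu /= phi0 fu0 /(congr1 (fun v => (v.1, v.2))).
rewrite /rmul /= smul1s scompXs // !scompsX smuls1 => -[e1 e2].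
by rewrite scompA // e2 scompsX in e1; rewrite e2.
Qed.

Definition sXnD k l : series := fun i => (i == k)%:R + (i == l)%:R.

Lemma agree_sXnD {m k l} : agree m (sXnD k l) ('X^k + 'X^l).
Proof. by move=> i _; rewrite coefD !coefXn. Qed.

Lemma Appell_sXnD m k : (m < k)%N -> Appell m (sXnD 0 k, sX).
Proof.
move=> mk; have k0 : (0 == k) = false by apply/eqP; lia.
split; first by split=> //; rewrite /sXnD /= k0 addr0.
split=> // i /andP[i_gt0 im].
have [i0 ik] : (i == 0%N) = false /\ (i == k) = false by split; apply/eqP; lia.
by rewrite /sXnD /= i0 ik addr0.
Qed.

Lemma inR_sXnD j : (1 < j)%N -> inR (sone, sXnD 1 j).
Proof.
move=> j_gt1; have [j0 j1] : (0 == j) = false /\ (1 == j) = false by split; apply/eqP; lia.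
by split=> //; rewrite /sXnD /= j0 j1 !addr0.
Qed.

Lemma agree_appell_comm k j u : (0 < j)%N -> odd k -> inR u ->
  smul u.1 (sXnD 0 k) = sone -> scomp (sXnD 1 j.+1) u.2 = sX ->
  agree (k + j).+1 (smul u.1 (scomp (sXnD 0 k) u.2)) (1 + 'X^(k + j)).
Proof.
move=> j_gt0 k_odd Ru ug phiu; set M := (k + j).+1.
have [gu fu] := (inR_agree u).1 Ru; have u0 := inR_f0 Ru.
set G := trunc M u.1; set phi := trunc M u.2.
have G1 : 'X %| G - 1 := agree_uniq (agree_le (ltn0Sn _) agree_trunc) gu.
have phiX : 'X^2 %| phi - 'X by apply: agree_uniq (agree_le _ agree_trunc) fu; rewrite /M; lia.
have Ginv : G * (1 + 'X^k) = 1 %[modX M].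
  apply: agree_uniq agree_sone; rewrite -ug -(expr0 'X).
  by apply: agree_smul; [apply: agree_trunc | apply: agree_sXnD].
have phi_inv : phi + phi ^+ j.+1 = 'X %[modX M].
  apply: agree_uniq agree_sX; rewrite -phiu -[phi in phi + _]comp_polyX -comp_polyXn -comp_polyD.
  by apply: agree_scomp => //; [apply: agree_sXnD | apply: agree_trunc].
apply: agree_eqmodX (appell_comm_estimate j_gt0 k_odd G1 phiX Ginv phi_inv).
rewrite -(expr0 phi) -(comp_polyXn 0) -(comp_polyXn k) -comp_polyD.
by apply: agree_smul; [|apply: agree_scomp => //]; first [apply: agree_trunc | apply: agree_sXnD].
Qed.

Lemma odd_split n m : (2 * n + 1 < m)%N ->
  exists j k, [/\ (0 < j)%N, odd k, m = (k + j)%N & (2 * n < k)%N].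
Proof.
move=> nm; have [m_odd | m_even] := boolP (odd m).
  have : m != (2 * n + 2)%N by apply: contraTneq m_odd => ->; rewrite oddD oddM.
  by exists 2%N, (m - 2)%N; split; [|rewrite oddB ?m_odd // | |]; lia.
by exists 1%N, (m - 1)%N; split; [|rewrite oddB ?(negbTE m_even) //| |]; lia.
Qed.

Lemma comm_appell_monomial n S m : (forall x, Appell (2 * n - 1) x -> gammaR n x) ->
  (forall c, is_comm (gammaR n) inR c -> S c) -> (2 * n + 1 < m)%N ->
  exists z, [/\ S z, z.2 = sX & agree m.+1 z.1 (1 + 'X^m)].
Proof.
move=> appell_gamma S_comm nm; have [j [k [j_gt0 k_odd -> nk]]] := odd_split nm.
have Aa : Appell (2 * n - 1) (sXnD 0 k, sX) by apply: Appell_sXnD; lia.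
have Ry : inR (sone, sXnD 1 j.+1) by apply: inR_sXnD.
have Ra := proj1 Aa; have [ai ainv] := rinv_exists Ra; have [yi yinv] := rinv_exists Ry.
have Sc : S (rmul (rmul (rmul ai yi) (sXnD 0 k, sX)) (sone, sXnD 1 j.+1)).
  apply: S_comm; exists (sXnD 0 k, sX), (sone, sXnD 1 j.+1), ai, yi.
  by split; [exact: appell_gamma | do 5 (split=> //)].
have [u [Ru uya] c_def] := commutatorE Ra Ry ainv yinv.
have [ug phiu c_eq] := appell_comm_shape (proj1 (proj2 Ry)) (inR_f0 Ru) uya.
rewrite c_def c_eq in Sc; exists (smul u.1 (scomp (sXnD 0 k) u.2), sX).
by split=> //; apply: agree_appell_comm.
Qed.

Lemma appell_approx m S x : subgroupR S ->
  (forall k, (m < k)%N -> exists z, [/\ S z, z.2 = sX & agree k.+1 z.1 (1 + 'X^k)]) ->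
  Appell m x ->
  forall d, exists s, [/\ S s, s.2 = sX & forall i, (i <= m + d)%N -> s.1 i = x.1 i].
Proof.
move=> [S_R [S1 [S_mul _]]] S_mono [[x0 _] [x2 x_low]].
elim=> [|d [s [Ss s2 sx]]].
  exists rid; split=> // -[_|i]; first by rewrite x0.
  by rewrite addn0 => im; rewrite x_low.
set N := (m + d).+1.
have [sxN | sxN] := eqVneq (s.1 N) (x.1 N).
  by exists s; split=> // i; rewrite addnS leq_eqVlt => /predU1P[->|] //; apply: sx.
have [z [Sz z2 z1]] := S_mono N (leq_addr d m).
exists (rmul s z); split; [exact: S_mul | by rewrite /= z2 s2 scompsX |].
move=> i; rewrite addnS /= s2 scompsX => iN.
rewrite (agree_smul (@agree_trunc N.+1 s.1) z1 iN) mulrDr mulr1 coefD coefMXn coef_poly.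
move: iN; rewrite leq_eqVlt => /predU1P[->|iN].
  by rewrite ltnn subnn coef_poly ltnSn (proj1 (S_R _ Ss)) (F2_neq_add1 sxN).
by rewrite iN addr0 ltnS ltnW // sx.
Qed.

Lemma appell_gamma n x : Appell (2 * n - 1) x -> gammaR n x.
Proof.
elim: n x => [|n IHn] x; first by case.
move=> Ax S S_sub S_closed S_comm.
have {}Ax : Appell (2 * n + 1) x by rewrite (_ : (2 * n + 1 = 2 * n.+1 - 1)%N) //; lia.
have [Rx [x2 _]] := Ax; apply: S_closed Rx _ => N.
have [s [Ss s2 sx]] := appell_approx S_sub (fun k => comm_appell_monomial IHn S_comm) Ax N.
by exists s; split=> // i iN; rewrite s2 x2 sx //; apply: leq_trans iN (leq_addl _ _).
Qed.

Local Close Scope ring_scope.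

Theorem corollary11 (n : nat) : (2 <= n)%N ->
  forall x : rpair,
    (Appell (2 * n - 3) x /\ gammaR n x) <-> Appell (2 * n - 1) x.
Proof.
move=> _ x; split=> [[[Rx [x2 _]] /gamma_Rlevel/Rlevel_agree[gx _]] | Ax].
  split=> //; split=> // i /andP[i_gt0 i_lt]; rewrite gx ?coef1 ?gtn_eqF //; lia.
split; last exact: appell_gamma.
case: Ax => Rx [x2 x_low]; split=> //; split=> // i /andP[i_gt0 i_le].
by apply: x_low; rewrite i_gt0; lia.
Qed.
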